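(* For every rooted tree $T_r=(V,E)$, $$f(T_r)\ \ge\ \frac{|V|}{2\,h(T_r)}-\frac{1}{2}.$$
   Context: For a tree $T_r$ rooted at $r$, $h(T_r)$ is the number of vertices on a longest path in $T_r$ starting at $r$ (a single vertex has $h=1$); the empty tree $T_\emptyset$ has $h(T_\emptyset)=0$ and $f(T_\emptyset)=0$. For a vertex $v$, $T_v$ is the subtree rooted at $v$ consisting of $v$ and its descendants. The function $f$ is defined recursively: if $|V(T_r)|\le1$ then $f(T_r)=0$; otherwise let the children of $r$ be $v_1,\dots,v_k$ ordered so that $h(T_{v_1})\ge\dots\ge h(T_{v_k})$, where if the number of children is odd an extra empty tree $T_{v_k}=T_\emptyset$ is appended so that $k$ is even; then $f(T_r)=\max\{\sum_{i=1}^k f(T_{v_i}),\ \sum_{i=1}^{k/2} h(T_{v_{2i}})\}$. *)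

(* Rooted trees as finite rose trees: a vertex with the
   (finite, unordered-in-spirit) list of its children subtrees. *)
From mathcomp Require Import all_boot all_order all_algebra.
Set Implicit Arguments. Unset Strict Implicit. Unset Printing Implicit Defensive.

Inductive rtree : Type := Node of seq rtree.

Fixpoint tree_size (t : rtree) : nat :=
  let: Node ts := t in (sumn (map tree_size ts)).+1.

(* h(T_r) : number of vertices on a longest path starting at the root *)
Fixpoint theight (t : rtree) : nat :=
  let: Node ts := t in (foldr maxn 0 (map theight ts)).+1.

(* given x_1, x_2, x_3, ... returns x_2 + x_4 + ...; a trailing unpaired
   element is paired with the empty tree (h = 0), contributing 0. *)
Fixpoint sum_even_pos (s : seq nat) : nat :=
  match s with
  | _ :: y :: r => y + sum_even_pos r
  | _ => 0
  end.

Fixpoint tf (t : rtree) : nat :=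
  let: Node ts := t in
  match ts with
  | [::] => 0
  | _ :: _ => maxn (sumn (map tf ts))
                   (sum_even_pos (sort geq (map theight ts)))
  end.

(* Every child c satisfies |c| <= h(c) (2 f(c) + 1) by induction, hence
   |c| <= 2 M f(c) + h(c) with M the largest child height. Pairing the
   children sorted by nonincreasing height, each odd-indexed height is at most
   the even-indexed one before it, except the first, which is at most M; so the
   heights sum to at most M + 2 Σ h(v_{2i}). As f(T) dominates both Σ f(c) and
   Σ h(v_{2i}), |T| <= 1 + 2 M f(T) + M + 2 f(T) = h(T) (2 f(T) + 1). *)
From mathcomp Require Import all_boot all_order all_algebra.
From mathcomp Require Import zify.
Import Order.TTheory GRing.Theory Num.Theory.

Fixpoint rtree_forall_ind (P : rtree -> Prop)
    (IH : forall ts, List.Forall P ts -> P (Node ts)) (t : rtree) : P t :=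
  let: Node ts := t in
  IH ts ((fix children (l : seq rtree) : List.Forall P l :=
            match l with
            | [::] => List.Forall_nil P
            | c :: r => List.Forall_cons c (@rtree_forall_ind P IH c) (children r)
            end) ts).

Lemma all_leq_foldr_maxn (s : seq nat) : all (leq^~ (foldr maxn 0 s)) s.
Proof.
elim: s => //= x s IH; rewrite leq_maxl.
by apply: sub_all IH => y /leq_trans; apply; rewrite leq_maxr.
Qed.

Lemma sumn_le_sum_even_pos (s : seq nat) (M : nat) :
  sorted geq s -> all (leq^~ M) s -> sumn s <= M + (sum_even_pos s).*2.
Proof.
move: {2}(size s) (leqnn (size s)) => n; elim: n s M => [|n IH] [|x [|y r]] M //=.
- by rewrite !addn0 => _ _ /andP[].
move=> size_s /andP[geq_xy path_yr] /and3P[le_xM le_yM _].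
have le_r : sumn r <= y + (sum_even_pos r).*2.
  apply: IH; first by move: size_s; lia.
    exact: path_sorted path_yr.
  by apply: sub_all (order_path_min (rev_trans leq_trans) path_yr).
lia.
Qed.

Lemma sumn_tree_size_le (ts : seq rtree) (M : nat) :
  List.Forall (fun c => tree_size c <= theight c * (tf c).*2.+1) ts ->
  all (leq^~ M) (map theight ts) ->
  sumn (map tree_size ts) <= (M * sumn (map tf ts)).*2 + sumn (map theight ts).
Proof.
elim: ts => //= c r IH /List.Forall_cons_iff[le_c /IH{}IH] /andP[le_cM /IH].
have : theight c * tf c <= M * tf c by rewrite leq_mul2r le_cM orbT.
lia.
Qed.

Lemma tree_size_le_theight_tf (t : rtree) :
  tree_size t <= theight t * (tf t).*2.+1.
Proof.
elim/rtree_forall_ind: t => -[//|c r] IH.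
set ts := c :: r; set M := foldr maxn 0 (map theight ts).
set F := sumn (map tf ts); set S := sum_even_pos (sort geq (map theight ts)).
have -> : tree_size (Node ts) = (sumn (map tree_size ts)).+1 by [].
have -> : theight (Node ts) = M.+1 by [].
have -> : tf (Node ts) = maxn F S by [].
have le_M : all (leq^~ M) (map theight ts) := all_leq_foldr_maxn _.
have le_sizes : sumn (map tree_size ts) <= (M * F).*2 + sumn (map theight ts).
  exact: sumn_tree_size_le IH le_M.
have le_heights : sumn (map theight ts) <= M + S.*2.
  rewrite -(perm_sumn (permEl (perm_sort geq _))).
  apply: sumn_le_sum_even_pos; last by rewrite all_sort.
  by apply: sort_sorted => x y; apply: leq_total.
have : M * F <= M * maxn F S by rewrite leq_mul2l leq_maxl orbT.
move: le_sizes le_heights (leq_maxr F S); clearbody M F S ts; lia.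
Qed.

Local Open Scope ring_scope.

Theorem lemma2 (t : rtree) :
  (tree_size t)%:R / (2 * theight t)%:R - 1 / 2 <= (tf t)%:R :> rat.
Proof.
have h_gt0 : (0 < theight t)%N by case: t.
rewrite lerBlDr ler_pdivrMr ?ltr0n ?muln_gt0 //.
have -> : (tf t)%:R + 1 / 2 = ((tf t).*2.+1)%:R / 2 :> rat.
  by rewrite -[(tf t).*2.+1]addn1 -muln2 natrD natrM mulrDl mulfK.
rewrite natrM -mulrA mulKf ?pnatr_eq0 // -natrM ler_nat mulnC.
exact: tree_size_le_theight_tf.
Qed.
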